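(* A strong regular facets-pairing structure $\mathcal{F}$ on $\mathcal{C}^n$ is perfect if and only if all $2^n$ vertices of $\mathcal{C}^n$ belong to a single face family of $\mathcal{F}$.
   Context: Let $[\pm n]=\{\pm1,\dots,\pm n\}$ and $\mathcal{C}^n=\{x\in\mathbb{R}^n: -\tfrac14\le x_i\le\tfrac14\}$. For $1\le i\le n$, $\mathbf{F}(i)$ and $\mathbf{F}(-i)$ denote the facets of $\mathcal{C}^n$ in $\{x_i=\tfrac14\}$ and $\{x_i=-\tfrac14\}$; for $j_1,\dots,j_s\in[\pm n]$ with distinct absolute values, $\mathbf{F}(j_1,\dots,j_s)=\bigcap_i\mathbf{F}(j_i)$ (every proper face has this form). A signed permutation is a bijection $\sigma$ of $[\pm n]$ with $\sigma(-k)=-\sigma(k)$. A facets-pairing structure on $\mathcal{C}^n$ is a pair $(\omega,\{\tau_j\})$ where $\omega$ is a bijection of $[\pm n]$ with $\omega\circ\omega=\mathrm{id}$ and $\tau_j:\mathbf{F}(j)\to\mathbf{F}(\omega(j))$ are face-preserving homeomorphisms with $\tau_{\omega(j)}=\tau_j^{-1}$, such that for all $|j|\ne|k|$, writing $\tau_j(\mathbf{F}(j,k))=\mathbf{F}(\omega(j),k')$ and $\tau_k(\mathbf{F}(j,k))=\mathbf{F}(j',\omega(k))$, one has $\tau_{k'}\tau_j(p)=\tau_{j'}\tau_k(p)$ for all $p\in\mathbf{F}(j,k)$. It is regular if each $\tau_j$ is a Euclidean isometry and $\omega$ is a signed permutation. A composition $\tau_{k_m}\circ\dots\circ\tau_{k_1}$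 applied to a proper face $f$ is valid if $f\subset\mathbf{F}(k_1)$ and $\tau_{k_i}\circ\dots\circ\tau_{k_1}(f)\subset\mathbf{F}(k_{i+1})$ for $1\le i<m$ ($m=0$ allowed). The face family $\widehat f$ is the set of faces $\tau_{k_m}\circ\dots\circ\tau_{k_1}(f)$ over all valid compositions. $\mathcal{F}$ is perfect if for every proper face $f$ of codimension $s$, $\widehat f$ has exactly $2^s$ elements. For a proper face $f$ let $\Xi(f)$ be the set of facets containing $f$. If $f\subset\mathbf{F}(k)$ and $f'=\tau_k(f)$, define $\Psi^f_k:\Xi(f)\to\Xi(f')$ by $\Psi^f_k(\mathbf{F}(k))=\mathbf{F}(\omega(k))$ and, for $F'\in\Xi(f)\setminus\{\mathbf{F}(k)\}$, $\Psi^f_k(F')$ is the facet $G$ with $G\cap\mathbf{F}(\omega(k))=\tau_k(F'\cap\mathbf{F}(k))$. $\mathcal{F}$ is strong if for every proper face $f$ and any two valid compositions mapping $f$ onto the same face $\widetilde f$: (a) they agree at every point of $f$; and (b) the corresponding composites of the maps $\Psi$ along the two compositions coincide as maps $\Xi(f)\to\Xi(\widetilde f)$. *)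

From Stdlib Require Import Reals.
From mathcomp Require Import all_boot.

Set Implicit Arguments.
Unset Strict Implicit.
Unset Printing Implicit Defensive.

Local Open Scope R_scope.

Definition pt (n : nat) := 'I_n -> R.

(* Signed indices [+-n]: (i, true) stands for +(i+1), (i, false) for -(i+1). *)
Definition sidx (n : nat) := ('I_n * bool)%type.
Definition sneg n (j : sidx n) : sidx n := (j.1, ~~ j.2).

Definition qval (b : bool) : R := if b then 1/4 else - (1/4).

Definition in_cube n (x : pt n) : Prop :=
  forall i, - (1/4) <= x i <= 1/4.

Definition facet n (j : sidx n) : pt n -> Prop :=
  fun x => in_cube x /\ x j.1 = qval j.2.

Definition facet2 n (j k : sidx n) : pt n -> Prop :=
  fun x => facet j x /\ facet k x.

(* Faces of the cube, encoded by which coordinates are fixed and to which sign.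
   A code c gives the face {x in C^n | x_i = +-1/4 whenever c i = Some +-}. *)
Definition code (n : nat) := {ffun 'I_n -> option bool}.

Definition face_pts n (c : code n) : pt n -> Prop :=
  fun x => in_cube x /\ forall i b, c i = Some b -> x i = qval b.

Definition proper_face n (c : code n) : Prop := exists i, c i <> None.
Definition codim n (c : code n) : nat := #|[pred i | c i != None]|.
Definition vertex n (c : code n) : Prop := forall i, c i <> None.

Definition subsetP' n (S T : pt n -> Prop) : Prop := forall x, S x -> T x.
Definition seteq n (S T : pt n -> Prop) : Prop := forall x, S x <-> T x.
Definition image n (g : pt n -> pt n) (S : pt n -> Prop) : pt n -> Prop :=
  fun y => exists2 x, S x & g x = y.

Definition dist n (x y : pt n) : R :=
  sqrt (\big[Rplus/R0]_(i < n) ((x i - y i) * (x i - y i))).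

Definition face_preserving n (j : sidx n) (g : pt n -> pt n) : Prop :=
  forall c, subsetP' (face_pts c) (facet j) ->
    exists c', seteq (image g (face_pts c)) (face_pts c').

Definition continuous_on n (S : pt n -> Prop) (g : pt n -> pt n) : Prop :=
  forall x, S x -> forall eps, 0 < eps -> exists2 delta, 0 < delta &
    forall y, S y -> dist x y < delta -> dist (g x) (g y) < eps.

(* Facets-pairing structure (omega, {tau_j}).  tau j is a total function,
   of which only its restriction to F(j) matters. *)
Definition fp_structure n (om : sidx n -> sidx n) (tau : sidx n -> pt n -> pt n)
  : Prop :=
  (forall j, om (om j) = j) /\
  (forall j x, facet j x -> facet (om j) (tau j x)) /\
  (* tau_{omega j} = tau_j^{-1} (with the above, tau_j : F(j) -> F(omega j) is a bijection) *)
  (forall j x, facet j x -> tau (om j) (tau j x) = x) /\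
  (* homeomorphism: continuity (the inverse is tau_{omega j}, also continuous) *)
  (forall j, continuous_on (facet j) (tau j)) /\
  (forall j, face_preserving j (tau j)) /\
  (forall j k k' j', j.1 <> k.1 ->
     seteq (image (tau j) (facet2 j k)) (facet2 (om j) k') ->
     seteq (image (tau k) (facet2 j k)) (facet2 j' (om k)) ->
     forall p, facet2 j k p -> tau k' (tau j p) = tau j' (tau k p)).

Definition regular n (om : sidx n -> sidx n) (tau : sidx n -> pt n -> pt n) : Prop :=
  fp_structure om tau /\
  (forall j x y, facet j x -> facet j y -> dist (tau j x) (tau j y) = dist x y) /\
  (forall j, om (sneg j) = sneg (om j)).

Section Compositions.
Variables (n : nat) (om : sidx n -> sidx n) (tau : sidx n -> pt n -> pt n).

Fixpoint img (ks : seq (sidx n)) (S : pt n -> Prop) : pt n -> Prop :=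
  match ks with
  | [::] => S
  | k :: ks' => img ks' (image (tau k) S)
  end.

Fixpoint comp (ks : seq (sidx n)) (p : pt n) : pt n :=
  match ks with
  | [::] => p
  | k :: ks' => comp ks' (tau k p)
  end.

Fixpoint valid (S : pt n -> Prop) (ks : seq (sidx n)) : Prop :=
  match ks with
  | [::] => True
  | k :: ks' => subsetP' S (facet k) /\ valid (image (tau k) S) ks'
  end.

Definition face_family (f g : code n) : Prop :=
  exists ks, valid (face_pts f) ks /\ seteq (face_pts g) (img ks (face_pts f)).

(* The map Psi^f_k on facets containing f (facets identified with signed indices),
   as a relation: Psi(F(k)) = F(omega k), and for F(j) <> F(k),
   Psi(F(j)) = G with G /\ F(omega k) = tau_k(F(j) /\ F(k)). *)
Definition PsiStep (k j j' : sidx n) : Prop :=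
  (j = k /\ j' = om k) \/
  (j <> k /\ seteq (facet2 j' (om k)) (image (tau k) (facet2 j k))).

Fixpoint PsiComp (ks : seq (sidx n)) (j j'' : sidx n) : Prop :=
  match ks with
  | [::] => j = j''
  | k :: ks' => exists j', PsiStep k j j' /\ PsiComp ks' j' j''
  end.

Definition strong : Prop :=
  forall (f : code n) ks1 ks2, proper_face f ->
    valid (face_pts f) ks1 -> valid (face_pts f) ks2 ->
    seteq (img ks1 (face_pts f)) (img ks2 (face_pts f)) ->
    (forall p, face_pts f p -> comp ks1 p = comp ks2 p) /\
    (forall j, subsetP' (face_pts f) (facet j) ->
       forall j'', PsiComp ks1 j j'' <-> PsiComp ks2 j j'').

Definition has_card (P : code n -> Prop) (m : nat) : Prop :=
  exists l : seq (code n), uniq l /\ size l = m /\ forall g, P g <-> g \in l.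

Definition perfect : Prop :=
  forall f : code n, proper_face f -> has_card (face_family f) (2 ^ codim f)%N.

End Compositions.

(* For a face [f], the faces of its family are the images of [f] under the
   compositions spelled by words in the labels of the facets containing [f],
   each letter being carried along by the maps [Psi].  The cycle condition makes
   two letters commute, [tau_(om k) o tau_k = id] cancels a repeated letter, and
   strongness makes both moves legitimate inside longer words; so the image only
   depends on the set of letters occurring an odd number of times.  Hence the
   family has at most [2^codim f] members, with equality iff no nonempty set of
   letters maps [f] back onto itself.  At a vertex whose family contains all
   [2^n] vertices, counting rules out such loops; and a loop at any face [f]
   fixes [f] pointwise by strongness, so it is also a loop at a vertex of [f]. *)

From Pilot Require Import Defs.
From Stdlib Require Import Reals Lra ClassicalEpsilon FunctionalExtensionality PropExtensionality.
From mathcomp Require Import all_boot.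
(* Import [Defs] again so that its [image] shadows [fintype.image]. *)
Import Defs.

Set Implicit Arguments.
Unset Strict Implicit.
Unset Printing Implicit Defensive.

Section Faces.
Local Open Scope R_scope.
Variable n : nat.
Implicit Types (c d : code n) (S T : pt n -> Prop) (j k : sidx n).

Lemma seteq_eq S T : seteq S T -> S = T.
Proof.
by move=> H; apply: functional_extensionality => x; apply: propositional_extensionality.
Qed.

Lemma qval_bound b : - (1/4) <= qval b <= 1/4.
Proof. case: b => /=; lra. Qed.

Lemma qval_inj : injective qval.
Proof. by case; case => //=; lra. Qed.

Lemma qval_neq0 b : qval b <> 0.
Proof. case: b => /=; lra. Qed.

Definition face_center c : pt n := fun i => if c i is Some b then qval b else 0.

Lemma face_center_in c : face_pts c (face_center c).
Proof.
split=> [i|i b ci]; rewrite /face_center; last by rewrite ci.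
by case: (c i) => [b|]; [exact: qval_bound | lra].
Qed.

Lemma face_nonempty c : exists x, face_pts c x.
Proof. by exists (face_center c); exact: face_center_in. Qed.

Lemma image_inhabited (g : pt n -> pt n) S : (exists x, S x) -> exists y, image g S y.
Proof. by case=> x Sx; exists (g x), x. Qed.

Lemma image_subset (g : pt n -> pt n) S T : subsetP' S T -> subsetP' (image g S) (image g T).
Proof. by move=> ST y [x Sx <-]; exists x => //; apply: ST. Qed.

Lemma image_image_eq (g1 h1 g2 h2 : pt n -> pt n) S :
  (forall x, S x -> g1 (h1 x) = g2 (h2 x)) -> image g1 (image h1 S) = image g2 (image h2 S).
Proof.
move=> E; apply: seteq_eq => z; split=> [[y [x Sx <-] <-] | [y [x Sx <-] <-]].
  by exists (h2 x); [exists x | rewrite E].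
by exists (h1 x); [exists x | rewrite E].
Qed.

Definition subface c d := forall i b, d i = Some b -> c i = Some b.

Lemma face_ptsS c d : subsetP' (face_pts c) (face_pts d) <-> subface c d.
Proof.
split=> [cd i b di | cd x [xC xc]]; last by split=> // i b /cd; exact: xc.
have [_ /(_ i b di)] := cd _ (face_center_in c); rewrite /face_center.
by case: (c i) => [b' /qval_inj -> // | /esym /qval_neq0].
Qed.

Lemma face_pts_inj : injective (@face_pts n).
Proof.
move=> c d E; have cd : subface c d by apply/face_ptsS; rewrite E.
have dc : subface d c by apply/face_ptsS; rewrite E.
apply/ffunP => i; case ci: (c i) => [b|]; first by rewrite (dc _ _ ci).
by case di: (d i) => [b|] //; rewrite (cd _ _ di) in ci.
Qed.

Definition facet_code k : code n := [ffun i => if i == k.1 then Some k.2 else None].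

Definition ridge_code j k : code n :=
  [ffun i => if i == k.1 then Some k.2 else if i == j.1 then Some j.2 else None].

Lemma facetE k : facet k = face_pts (facet_code k).
Proof.
apply: seteq_eq => x; split=> [[xC xk] | [xC xk]].
  by split=> // i b; rewrite ffunE; case: eqP => // -> [<-].
by split=> //; apply: xk; rewrite ffunE eqxx.
Qed.

Lemma facet2E j k : j.1 != k.1 -> facet2 j k = face_pts (ridge_code j k).
Proof.
move=> jk; apply: seteq_eq => x; split=> [[[xC xj] [_ xk]] | [xC xjk]].
  split=> // i b; rewrite ffunE; case: eqP => [-> [<-] //|_].
  by case: eqP => // -> [<-].
by split; split=> //; apply: xjk; rewrite ffunE ?eqxx // (negbTE jk).
Qed.

Lemma facet2C j k : facet2 j k = facet2 k j.
Proof. by apply: seteq_eq => x; split=> -[]. Qed.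

Lemma face_sub_facet c k : subsetP' (face_pts c) (facet k) <-> c k.1 = Some k.2.
Proof.
rewrite facetE face_ptsS; split=> [ck | ck i b]; first by apply: ck; rewrite ffunE eqxx.
by rewrite ffunE; case: eqP => // -> [<-].
Qed.

Lemma sidx_eq_on_facets j k x : facet j x -> facet k x -> j.1 = k.1 -> j = k.
Proof.
case: j k => [i b] [i' b'] [_ /= xj] [_ /= xk] /= ii'.
by rewrite ii' xk in xj; rewrite ii' (qval_inj xj).
Qed.

Lemma facet_or_indep S j k : (exists x, S x) -> subsetP' S (facet j) -> subsetP' S (facet k) ->
  j = k \/ j.1 != k.1.
Proof.
move=> [x Sx] Sj Sk; case: (eqVneq j.1 k.1) => [jk|]; last by right.
by left; apply: sidx_eq_on_facets (Sj _ Sx) (Sk _ Sx) jk.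
Qed.

Lemma facet2_neq_facet j k : j.1 != k.1 -> facet2 j k <> facet k.
Proof.
move=> jk; rewrite facet2E // facetE => /face_pts_inj /ffunP /(_ j.1).
by rewrite !ffunE (negbTE jk) eqxx.
Qed.

Lemma facet2_inj (a a' m : sidx n) : a.1 != m.1 -> facet2 a' m = facet2 a m -> a' = a.
Proof.
move=> am E; case: (eqVneq a'.1 m.1) => [a'm | a'm].
  have [x xam] := face_nonempty (ridge_code a m).
  rewrite -facet2E // -E in xam; case: xam => xa' xm.
  have a'E := sidx_eq_on_facets xa' xm a'm.
  have : facet2 a' m = facet m by rewrite a'E; apply: seteq_eq => y; split=> [[]|] //; split.
  by rewrite E => /(facet2_neq_facet am).
move: E; rewrite !facet2E // => /face_pts_inj /ffunP /(_ a'.1).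
rewrite !ffunE eqxx (negbTE a'm); case: eqP => // aa [ab].
by move: aa ab; case: (a') => ? ? /= -> ->; case: (a).
Qed.

Lemma facet_strict_face c m : c m.1 = Some m.2 -> face_pts c <> facet m ->
  exists a : sidx n, a.1 != m.1 /\ c a.1 = Some a.2.
Proof.
move=> cm cNm; apply: NNPP => noa; apply: cNm; rewrite facetE; congr face_pts.
apply/ffunP => i; rewrite ffunE; case: eqP => [-> // | /eqP im].
by case ci: (c i) => [b|] //; case: noa; exists (i, b).
Qed.

Lemma face_between_ridge_facet d j k : j.1 != k.1 -> d k.1 = Some k.2 ->
  subsetP' (facet2 j k) (face_pts d) -> face_pts d = facet2 j k \/ face_pts d = facet k.
Proof.
move=> jk dk; rewrite facet2E // face_ptsS => dsub.
have d_off i : i != j.1 -> i != k.1 -> d i = None.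
  move=> ij ik; case di: (d i) => [b|] //.
  by move: (dsub _ _ di); rewrite ffunE (negbTE ik) (negbTE ij).
case dj: (d j.1) => [b|]; [left | right; rewrite facetE];
  congr face_pts; apply/ffunP => i; rewrite ffunE.
- case: eqP => [-> // | /eqP ik]; case: eqP => [-> | /eqP ij]; last exact: d_off.
  by rewrite dj; move: (dsub _ _ dj); rewrite ffunE (negbTE jk) eqxx.
- case: eqP => [-> // | /eqP ik]; case: (eqVneq i j.1) => [-> // | ij]; exact: d_off.
Qed.

Definition face_code S : code n :=
  epsilon (inhabits [ffun=> None]) (fun c => face_pts c = S).

Lemma face_codeK S : (exists c, face_pts c = S) -> face_pts (face_code S) = S.
Proof. exact: epsilon_spec. Qed.

End Faces.

Section Vertices.
Variable n : nat.
Implicit Types (c v : code n).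

Lemma vertex_ptsE v : vertex v -> face_pts v = (fun x => x = face_center v).
Proof.
move=> vV; apply: seteq_eq => x; split=> [[_ xv] | ->]; last exact: face_center_in.
apply: functional_extensionality => i; rewrite /face_center.
by case vi: (v i) => [b|]; [exact: xv | case: (vV i)].
Qed.

(* A free coordinate could be moved to [1/4] without leaving the face. *)
Lemma vertex_of_singleton c p : face_pts c = (fun x => x = p) -> vertex c.
Proof.
move=> E i ci.
pose y : pt n := fun i' => if i' == i then qval true else face_center c i'.
have yC : face_pts c y.
  have [cC cc] := face_center_in c.
  split=> [i'|i' b]; rewrite /y; case: (eqVneq i' i) => [E'|_] //.
  - exact: qval_bound true.
  - by rewrite E' ci.
  - exact: cc.
have c0 := face_center_in c; rewrite E in yC c0.
have /(congr1 (fun x => x i)) := etrans yC (esym c0).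
by rewrite /y /face_center eqxx ci; exact: qval_neq0.
Qed.

Definition vertices : {set code n} := [set v : code n | [forall i, v i != None]].

Lemma verticesP v : reflect (vertex v) (v \in vertices).
Proof. by rewrite inE; apply: (iffP forallP) => vV i; apply/eqP. Qed.

Lemma card_vertices : #|vertices| = 2 ^ n.
Proof.
pose vert (s : {ffun 'I_n -> bool}) : code n := [ffun i => Some (s i)].
have vert_inj : injective vert.
  by move=> s1 s2 /ffunP E; apply/ffunP => i; move: (E i); rewrite !ffunE => -[].
have -> : vertices = vert @: setT.
  apply/setP => v; apply/verticesP/imsetP => [vV | [s _ ->] i]; last by rewrite ffunE.
  exists [ffun i => odflt true (v i)] => //.
  by apply/ffunP => i; rewrite !ffunE; case: (v i) (vV i).
by rewrite card_imset // cardsT card_ffun card_bool card_ord.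
Qed.

Lemma codim_vertex v : vertex v -> codim v = n.
Proof.
by move=> vV; rewrite /codim -[RHS]card_ord; apply: eq_card => i; rewrite !inE; apply/eqP.
Qed.

Lemma exists_vertex_subface (f : code n) : exists2 u, vertex u & subface u f.
Proof.
exists [ffun i => if f i is Some b then Some b else Some true] => [i|i b fi].
  by rewrite ffunE; case: (f i).
by rewrite ffunE fi.
Qed.

Lemma has_card_vertices (P : code n -> Prop) : has_card P (2 ^ n) ->
  (forall g, P g -> vertex g) -> forall v, vertex v -> P v.
Proof.
move=> [l [l_uniq [l_size Pl]]] PV v vV; apply/Pl.
have sub_l : [set g in l] \subset vertices.
  by apply/subsetP => g; rewrite inE => /Pl /PV /verticesP.
have l_vertices : [set g in l] = vertices.
  apply/eqP; rewrite eqEcard sub_l card_vertices cardsE.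
  by move/card_uniqP: l_uniq => ->; rewrite l_size leqnn.
by move/verticesP: vV; rewrite -l_vertices inE.
Qed.

End Vertices.

Section Pairing.
Variables (n : nat) (om : sidx n -> sidx n) (tau : sidx n -> pt n -> pt n).
Hypothesis fpS : fp_structure om tau.
Implicit Types (c d : code n) (S T : pt n -> Prop) (j k : sidx n) (A : {set sidx n}).

Lemma om_invol j : om (om j) = j.
Proof. by have [H _] := fpS; apply: H. Qed.

Lemma tau_facet j x : facet j x -> facet (om j) (tau j x).
Proof. by have [_ [H _]] := fpS; apply: H. Qed.

Lemma tauK j x : facet j x -> tau (om j) (tau j x) = x.
Proof. by have [_ [_ [H _]]] := fpS; apply: H. Qed.

Lemma image_tau_facet k S : subsetP' S (facet k) -> subsetP' (image (tau k) S) (facet (om k)).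
Proof. by move=> Sk y [x Sx <-]; apply/tau_facet/Sk. Qed.

Lemma image_tauK k S : subsetP' S (facet k) -> image (tau (om k)) (image (tau k) S) = S.
Proof.
move=> Sk; apply: seteq_eq => x; split=> [[z [y Sy <-] <-] | Sx].
  by rewrite tauK //; apply: Sk.
by exists (tau k x); [exists x | rewrite tauK //; apply: Sk].
Qed.

Lemma image_tauKV k S : subsetP' S (facet (om k)) -> image (tau k) (image (tau (om k)) S) = S.
Proof. by move/image_tauK; rewrite om_invol. Qed.

Lemma image_tau_facetE k : image (tau k) (facet k) = facet (om k).
Proof.
apply: seteq_eq => y; split=> [|yk]; first exact: image_tau_facet.
exists (tau (om k) y); last by have := tauK yk; rewrite om_invol.
by rewrite -[k in facet k]om_invol; apply: tau_facet.
Qed.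

Lemma image_tau_face c k : subsetP' (face_pts c) (facet k) ->
  exists c', image (tau k) (face_pts c) = face_pts c'.
Proof.
case: fpS => _ [_ [_ [_ [face_pres _]]]] /face_pres [c' E].
by exists c'; apply: seteq_eq.
Qed.

(* [tau_k] and its inverse preserve faces and inclusions, so the ridge [F(j,k)],
   with no face strictly between it and [F(k)], goes to a ridge of [F(om k)]. *)
Lemma image_ridge j k : j.1 != k.1 ->
  exists2 a, a.1 != (om k).1 & image (tau k) (facet2 j k) = facet2 a (om k).
Proof.
move=> jk; have ridge_k : subsetP' (facet2 j k) (facet k) by move=> x [].
have [c' Ec'] : exists c', image (tau k) (facet2 j k) = face_pts c'.
  by rewrite facet2E //; apply: image_tau_face; rewrite -facet2E.
have c'k : c' (om k).1 = Some (om k).2.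
  by apply/face_sub_facet; rewrite -Ec'; exact: image_tau_facet.
have [a [ak c'a]] : exists a, a.1 != (om k).1 /\ c' a.1 = Some a.2.
  apply: facet_strict_face c'k _ => Ec'k; apply: (facet2_neq_facet jk).
  by rewrite -(image_tauK ridge_k) Ec' Ec'k image_tau_facetE om_invol.
exists a => //.
have [d Ed] : exists d, image (tau (om k)) (facet2 a (om k)) = face_pts d.
  by rewrite facet2E //; apply: image_tau_face; rewrite -facet2E // => x [].
have dk : d k.1 = Some k.2.
  by apply/face_sub_facet; rewrite -Ed -[in facet k](om_invol k); apply: image_tau_facet => x [].
have sub_d : subsetP' (facet2 j k) (face_pts d).
  rewrite -Ed -(image_tauK ridge_k) Ec'; apply: image_subset.
  rewrite facet2E // face_ptsS => i b; rewrite ffunE.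
  by case: eqP => [-> [<-] // | _]; case: eqP => // -> [<-].
have Ed' : image (tau k) (face_pts d) = facet2 a (om k) by rewrite -Ed image_tauKV // => x [].
case: (face_between_ridge_facet jk dk sub_d) => dE; first by rewrite -dE Ed'.
by move: Ed'; rewrite dE image_tau_facetE => /esym /(facet2_neq_facet ak).
Qed.

(* The map [Psi_k] on facets, facets being identified with their labels.  It
   only depends on [F(j) /\ F(k)], not on the face [f] of the paper. *)
Definition psi k j : sidx n :=
  if j == k then om k
  else epsilon (inhabits j) (fun a => facet2 a (om k) = image (tau k) (facet2 j k)).

Lemma psi_self k : psi k k = om k.
Proof. by rewrite /psi eqxx. Qed.

Lemma psi_ridge j k : j.1 != k.1 ->
  (psi k j).1 != (om k).1 /\ image (tau k) (facet2 j k) = facet2 (psi k j) (om k).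
Proof.
move=> jk; have [a ak Ea] := image_ridge jk.
have -> : psi k j = a.
  have jNk : (j == k) = false by apply: contraNF jk => /eqP ->.
  rewrite /psi jNk; apply: facet2_inj ak _.
  rewrite -Ea; apply: (epsilon_spec (inhabits j) (fun a => facet2 a (om k) = _)).
  by exists a.
by split.
Qed.

Lemma PsiStepE k j j' : j = k \/ j.1 != k.1 -> PsiStep om tau k j j' <-> j' = psi k j.
Proof.
rewrite /PsiStep; case=> [-> | jk].
  by rewrite psi_self; split=> [[[_ ->] | []] // | ->]; left.
have jNk : j <> k by move=> E; rewrite E eqxx in jk.
have [psiNk Epsi] := psi_ridge jk.
split=> [[[] // | [_ E]] | ->]; last by right; split=> //; rewrite Epsi.
by apply: facet2_inj psiNk _; apply: seteq_eq => x; rewrite -Epsi E.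
Qed.

Lemma psi_facet S j k : (exists x, S x) -> subsetP' S (facet j) -> subsetP' S (facet k) ->
  subsetP' (image (tau k) S) (facet (psi k j)).
Proof.
move=> S0 Sj Sk; case: (facet_or_indep S0 Sj Sk) => [-> | jk].
  by rewrite psi_self; exact: image_tau_facet.
have [_ Epsi] := psi_ridge jk.
move=> y Sy; have : facet2 (psi k j) (om k) y.
  by rewrite -Epsi; move: y Sy; apply: image_subset => x Sx; split; [apply: Sj | apply: Sk].
by case.
Qed.

Lemma psiK j k : j = k \/ j.1 != k.1 -> psi (om k) (psi k j) = j.
Proof.
case=> [-> | jk]; first by rewrite !psi_self om_invol.
have [psiNk Epsi] := psi_ridge jk; have [_ Epsi'] := psi_ridge psiNk.
move: Epsi'; rewrite -Epsi image_tauK ?om_invol; last by move=> x [].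
by move=> E; apply: facet2_inj jk _; rewrite E.
Qed.

Lemma psi_inj S k j1 j2 : (exists x, S x) -> subsetP' S (facet k) ->
  subsetP' S (facet j1) -> subsetP' S (facet j2) -> psi k j1 = psi k j2 -> j1 = j2.
Proof.
move=> S0 Sk Sj1 Sj2 E.
by rewrite -(psiK (facet_or_indep S0 Sj1 Sk)) E (psiK (facet_or_indep S0 Sj2 Sk)).
Qed.

Lemma psi_surj S k m : (exists x, S x) -> subsetP' S (facet k) ->
  subsetP' (image (tau k) S) (facet m) -> exists2 j, subsetP' S (facet j) & psi k j = m.
Proof.
move=> S0 Sk Sm; have TS0 := image_inhabited (tau k) S0.
have TSk := image_tau_facet Sk.
exists (psi (om k) m); last by have := psiK (facet_or_indep TS0 Sm TSk); rewrite om_invol.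
by rewrite -(image_tauK Sk); apply: psi_facet.
Qed.

Definition psis ks j := foldl (fun j k => psi k j) j ks.

Lemma psis_cat ks1 ks2 j : psis (ks1 ++ ks2) j = psis ks2 (psis ks1 j).
Proof. exact: foldl_cat. Qed.

Lemma psis_rcons ks k j : psis (rcons ks k) j = psi k (psis ks j).
Proof. by rewrite -cats1 psis_cat. Qed.

Lemma img_cat ks1 ks2 S : img tau (ks1 ++ ks2) S = img tau ks2 (img tau ks1 S).
Proof. by elim: ks1 S => //= k ks IH S; rewrite IH. Qed.

Lemma valid_cat S ks1 ks2 :
  valid tau S (ks1 ++ ks2) <-> valid tau S ks1 /\ valid tau (img tau ks1 S) ks2.
Proof.
elim: ks1 S => [|k ks IH] S /=; first by split=> // -[].
by rewrite IH; split=> [[? []] | [[]]].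
Qed.

Lemma valid_rcons S ks k :
  valid tau S (rcons ks k) <-> valid tau S ks /\ subsetP' (img tau ks S) (facet k).
Proof. by rewrite -cats1 valid_cat /=; split=> [[? []] | []]. Qed.

Lemma img_inhabited ks S : (exists x, S x) -> exists x, img tau ks S x.
Proof. by elim: ks S => //= k ks IH S /(image_inhabited (tau k)); apply: IH. Qed.

Lemma img_point ks p : img tau ks (fun x => x = p) = (fun x => x = comp tau ks p).
Proof.
elim: ks p => //= k ks IH p; rewrite -IH; congr img.
by apply: seteq_eq => y; split=> [[x -> <-] | ->] //; exists p.
Qed.

Lemma psis_facet S ks j : valid tau S ks -> (exists x, S x) -> subsetP' S (facet j) ->
  subsetP' (img tau ks S) (facet (psis ks j)).
Proof.
elim: ks S j => //= k ks IH S j [Sk vks] S0 Sj.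
by apply: IH => //; [exact: image_inhabited | exact: psi_facet].
Qed.

Lemma PsiCompE S ks j j' : valid tau S ks -> (exists x, S x) -> subsetP' S (facet j) ->
  PsiComp om tau ks j j' <-> j' = psis ks j.
Proof.
elim: ks S j j' => [|k ks IH] S j j' /=; first by split=> ->.
case=> Sk vks S0 Sj.
have TS0 := image_inhabited (tau k) S0.
have IHk j'' := IH _ (psi k j) j'' vks TS0 (psi_facet S0 Sj Sk).
have stepE j'' := PsiStepE j'' (facet_or_indep S0 Sj Sk).
split=> [[j1 [/stepE -> /(proj1 (IHk _))]] // | ->].
by exists (psi k j); split; [exact/stepE | exact: (proj2 (IHk _))].
Qed.

Lemma psis_inj S ks j1 j2 : valid tau S ks -> (exists x, S x) ->
  subsetP' S (facet j1) -> subsetP' S (facet j2) -> psis ks j1 = psis ks j2 -> j1 = j2.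
Proof.
elim: ks S j1 j2 => //= k ks IH S j1 j2 [Sk vks] S0 Sj1 Sj2 E.
have TS0 := image_inhabited (tau k) S0.
apply: (psi_inj S0 Sk Sj1 Sj2); apply: (IH _ _ _ vks TS0 _ _ E); exact: psi_facet.
Qed.

Lemma psis_surj S ks m : valid tau S ks -> (exists x, S x) ->
  subsetP' (img tau ks S) (facet m) -> exists2 j, subsetP' S (facet j) & psis ks j = m.
Proof.
elim: ks S m => [|k ks IH] S m /=; first by move=> _ _ Sm; exists m.
case=> Sk vks S0 Sm.
have TS0 := image_inhabited (tau k) S0.
have [j' Sj' <-] := IH _ _ vks TS0 Sm.
by have [j Sj <-] := psi_surj S0 Sk Sj'; exists j.
Qed.

Lemma img_face ks c : valid tau (face_pts c) ks ->
  exists c', img tau ks (face_pts c) = face_pts c'.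
Proof.
elim: ks c => [|k ks IH] c /=; first by exists c.
by case=> /image_tau_face [c1 ->]; apply: IH.
Qed.

Lemma valid_rev S ks : valid tau S ks ->
  valid tau (img tau ks S) (rev (map om ks)) /\ img tau (rev (map om ks)) (img tau ks S) = S.
Proof.
elim: ks S => [|k ks IH] S //= [Sk /IH [vrev imgK]].
rewrite rev_cons valid_rcons -cats1 img_cat imgK /= image_tauK //.
by split=> //; split=> //; exact: image_tau_facet.
Qed.

Lemma face_familyE f g : face_family tau f g <->
  exists2 ks, valid tau (face_pts f) ks & face_pts g = img tau ks (face_pts f).
Proof. by split=> [[ks [v /seteq_eq E]] | [ks v E]]; exists ks => //; rewrite E. Qed.

Lemma face_family_sym f g : face_family tau f g -> face_family tau g f.
Proof.
move/face_familyE=> [ks v E]; apply/face_familyE; have [vrev imgK] := valid_rev v.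
by exists (rev (map om ks)); rewrite E.
Qed.

Lemma face_family_trans f g h :
  face_family tau f g -> face_family tau g h -> face_family tau f h.
Proof.
move=> /face_familyE [ks1 v1 E1] /face_familyE [ks2 v2 E2]; apply/face_familyE.
by exists (ks1 ++ ks2); [apply/valid_cat; rewrite -E1 | rewrite img_cat -E1].
Qed.

Lemma face_family_vertex f g : vertex f -> face_family tau f g -> vertex g.
Proof.
move=> fV /face_familyE [ks _ E]; apply: (@vertex_of_singleton _ _ (comp tau ks (face_center f))).
by rewrite E vertex_ptsE // img_point.
Qed.

Definition labels (f : code n) : {set sidx n} := [set j | f j.1 == Some j.2].

(* The composition spelled by a word [w] of labels of facets containing a face:
   each letter is carried along by the [Psi] maps of the composition built so
   far, so that it names a facet containing the current image of the face. *)
Definition realize (w : seq (sidx n)) : seq (sidx n) :=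
  foldl (fun ks l => rcons ks (psis ks l)) [::] w.

Definition transport (f : code n) w := img tau (realize w) (face_pts f).

Definition loop_free (f : code n) := forall C : {set sidx n},
  C \subset labels f -> transport f (enum C) = face_pts f -> C = set0.

Definition family_face (f : code n) (A : {set sidx n}) := face_code (transport f (enum A)).

Lemma realize_rcons w l : realize (rcons w l) = rcons (realize w) (psis (realize w) l).
Proof. by rewrite /realize -cats1 foldl_cat. Qed.

Definition odd_letters (w : seq (sidx n)) : {set sidx n} := [set l | odd (count_mem l w)].

Lemma repeated_letter (w : seq (sidx n)) : ~~ uniq w -> exists a, 1 < count_mem a w.
Proof.
move=> wNU; apply/existsP; apply: contraNT wNU => /existsPn a1.
apply: count_mem_uniq => a; have := a1 a; rewrite -leqNgt -has_pred1 has_count.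
by case: (count_mem a w) => [|[]].
Qed.

Hypothesis strongS : strong om tau.

Section OneFace.
Variable f : code n.
Local Notation L := (labels f).
Local Notation lword := (all (fun l => l \in labels f)).
Local Notation I := (transport f).

Lemma labelsP j : j \in L <-> subsetP' (face_pts f) (facet j).
Proof. by rewrite inE face_sub_facet; split=> /eqP. Qed.

Lemma valid_realize w : lword w -> valid tau (face_pts f) (realize w).
Proof.
elim/last_ind: w => // w l IH; rewrite all_rcons => /andP [Ll Lw].
rewrite realize_rcons; apply/valid_rcons; split; first exact: IH.
by apply: psis_facet; [exact: IH | exact: face_nonempty | exact/labelsP].
Qed.

Lemma transport_rcons w l : I (rcons w l) = image (tau (psis (realize w) l)) (I w).
Proof. by rewrite /transport realize_rcons -cats1 img_cat. Qed.

Lemma transport_facet w l : lword w -> l \in L ->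
  subsetP' (I w) (facet (psis (realize w) l)).
Proof.
move=> Lw Ll; apply: psis_facet; [exact: valid_realize | exact: face_nonempty | exact/labelsP].
Qed.

Lemma realize_surj ks : valid tau (face_pts f) ks -> exists2 w, lword w & ks = realize w.
Proof.
elim/last_ind: ks => [|ks k IH]; first by exists [::].
case/valid_rcons=> /IH [w Lw ->] k_face.
have [l Ll <-] := psis_surj (valid_realize Lw) (face_nonempty f) k_face.
by exists (rcons w l); rewrite ?all_rcons ?Lw ?realize_rcons // andbT; apply/labelsP.
Qed.

Hypothesis f_proper : proper_face f.

Lemma psis_realize_congr w1 w2 l : lword w1 -> lword w2 -> I w1 = I w2 -> l \in L ->
  psis (realize w1) l = psis (realize w2) l.
Proof.
move=> Lw1 Lw2 E Ll; have fl := proj1 (labelsP l) Ll.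
have v1 := valid_realize Lw1; have v2 := valid_realize Lw2.
have E' : seteq (img tau (realize w1) (face_pts f)) (img tau (realize w2) (face_pts f)).
  by move: E; rewrite /transport => ->.
have [_ PsiE] := strongS f_proper v1 v2 E'.
have := proj1 (PsiE l fl (psis (realize w1) l)).
rewrite (PsiCompE _ v1 (face_nonempty f) fl) (PsiCompE _ v2 (face_nonempty f) fl).
by move/(_ erefl).
Qed.

Lemma transport_congr w1 w2 t : lword w1 -> lword w2 -> lword t ->
  I w1 = I w2 -> I (w1 ++ t) = I (w2 ++ t).
Proof.
move=> Lw1 Lw2; elim/last_ind: t => [|t l IH]; first by rewrite !cats0.
rewrite all_rcons => /andP [Ll Lt] E; rewrite -!rcons_cat !transport_rcons IH //.
by rewrite (@psis_realize_congr (w1 ++ t) (w2 ++ t)) ?all_cat ?Lw1 ?Lw2 ?IH.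
Qed.

Lemma transport_swap w a b : lword w -> a \in L -> b \in L ->
  I (rcons (rcons w a) b) = I (rcons (rcons w b) a).
Proof.
move=> Lw La Lb; case: (eqVneq a b) => [-> // | ab].
rewrite !transport_rcons !realize_rcons !psis_rcons.
set k := psis (realize w) a; set j := psis (realize w) b.
have wk : subsetP' (I w) (facet k) by exact: transport_facet.
have wj : subsetP' (I w) (facet j) by exact: transport_facet.
have jk : j.1 != k.1.
  have [jk|//] := facet_or_indep (img_inhabited _ (face_nonempty f)) wj wk.
  case/eqP: ab; apply: (psis_inj (valid_realize Lw) (face_nonempty f)) (esym jk);
    exact/labelsP.
have kj : k.1 != j.1 by rewrite eq_sym.
have [_ Ek] := psi_ridge jk; have [_ Ej] := psi_ridge kj.
have [_ [_ [_ [_ [_ cycle]]]]] := fpS.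
apply: image_image_eq => x wx; have jkx : facet2 j k x by split; [exact: wj | exact: wk].
apply/esym/(cycle _ _ _ _ _ _ _ _ jkx).
- exact/eqP.
- by rewrite facet2C Ej facet2C.
- by rewrite Ek.
Qed.

Lemma transport_cancel w a : lword w -> a \in L -> I (rcons (rcons w a) a) = I w.
Proof.
move=> Lw La; rewrite !transport_rcons realize_rcons psis_rcons psi_self image_tauK //.
exact: transport_facet.
Qed.

Lemma transport_swap_mid p a b t : lword p -> lword t -> a \in L -> b \in L ->
  I (p ++ a :: b :: t) = I (p ++ b :: a :: t).
Proof.
move=> Lp Lt La Lb; rewrite -!cat_rcons.
by apply: transport_congr; rewrite ?all_rcons ?La ?Lb ?Lp //; exact: transport_swap.
Qed.

Lemma transport_cancel_mid p a t : lword p -> lword t -> a \in L ->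
  I (p ++ a :: a :: t) = I (p ++ t).
Proof.
move=> Lp Lt La; rewrite -!cat_rcons.
by apply: transport_congr; rewrite ?all_rcons ?La ?Lp //; exact: transport_cancel.
Qed.

Lemma transport_move p a v t : lword p -> a \in L -> lword v -> lword t ->
  I (p ++ a :: v ++ t) = I (p ++ v ++ a :: t).
Proof.
elim: v p => [|b v IH] p Lp La //= /andP [Lb Lv] Lt.
rewrite transport_swap_mid ?all_cat ?Lv ?Lt // -!(cat_rcons b p).
by apply: IH; rewrite ?all_rcons ?Lb.
Qed.

Lemma transport_perm p u v : perm_eq u v -> lword p -> lword u -> I (p ++ u) = I (p ++ v).
Proof.
elim: u v p => [|a u IH] v p; first by rewrite perm_sym => /perm_nilP ->.
move=> uv Lp /andP [La Lu]; have av : a \in v by rewrite -(perm_mem uv) mem_head.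
case/splitPr: av uv => v1 v2 auv.
have uv : perm_eq u (v1 ++ v2).
  by rewrite -(perm_cons a); apply: perm_trans auv _; rewrite -cat1s perm_catCA.
have /andP [Lv1 Lv2] : lword v1 && lword v2 by rewrite -all_cat -(perm_all _ uv).
by rewrite -(cat_rcons a p) (IH _ _ uv) ?all_rcons ?La ?Lp // cat_rcons transport_move.
Qed.

Lemma odd_letters_sub w : lword w -> odd_letters w \subset L.
Proof.
move=> Lw; apply/subsetP => l; rewrite inE => odd_l; apply: (allP Lw).
by rewrite -has_pred1 has_count; case: (count_mem l w) odd_l.
Qed.

Lemma transport_odd_letters w : lword w -> I w = I (enum (odd_letters w)).
Proof.
elim: {w}_.+1 {-2}w (ltnSn (size w)) => // m IH w wm Lw.
have [wU | /repeated_letter [a a2]] := boolP (uniq w).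
  rewrite -[w]cat0s -[enum _]cat0s; apply: transport_perm => //.
  apply: uniq_perm; rewrite ?enum_uniq // => l.
  by rewrite mem_enum inE count_uniq_mem //; case: (l \in w).
have aw : a \in w by rewrite -has_pred1 has_count ltnW.
have arw : a \in rem a w by rewrite -has_pred1 has_count count_mem_rem eqxx subn_gt0.
have w_perm : perm_eq w ([:: a; a] ++ rem a (rem a w)).
  by apply: perm_trans (perm_to_rem aw) _; rewrite perm_cons; exact: perm_to_rem.
have Lw' : lword (rem a (rem a w)) by apply/allP => l /mem_rem /mem_rem /(allP Lw).
have odd_w' : odd_letters (rem a (rem a w)) = odd_letters w.
  apply/setP => l; rewrite !inE !count_mem_rem.
  case: eqP => [<- | _]; rewrite ?subn0 //.
  by case: (count_mem a w) a2 => [|[|c]] //= _; rewrite !subn1 /= negbK.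
rewrite -[w]cat0s (transport_perm (p := [::]) w_perm) //.
rewrite (transport_cancel_mid (p := [::])) ?(allP Lw _ aw) // -odd_w' IH //.
rewrite !size_rem //; have s2 : 1 < size w := leq_trans a2 (count_size _ _).
by case: (size w) wm s2 => [|[|s]] // + _; rewrite ltnS => /ltnW.
Qed.

Lemma lword_enum A : A \subset L -> lword (enum A).
Proof. by move=> AL; apply/allP => l; rewrite mem_enum; apply: (subsetP AL). Qed.

Lemma family_face_pts A : A \subset L -> face_pts (family_face f A) = I (enum A).
Proof. by move=> /lword_enum /valid_realize /img_face [c E]; apply: face_codeK; exists c. Qed.

Lemma face_familyP g :
  face_family tau f g <-> exists2 A : {set sidx n}, A \subset L & g = family_face f A.
Proof.
split=> [/face_familyE [ks /realize_surj [w Lw ->] E] | [A AL ->]].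
  exists (odd_letters w); first exact: odd_letters_sub.
  by apply: face_pts_inj; rewrite family_face_pts ?odd_letters_sub // -transport_odd_letters.
apply/face_familyE; exists (realize (enum A)); last exact: family_face_pts.
exact/valid_realize/lword_enum.
Qed.

Lemma card_labels : #|L| = codim f.
Proof.
rewrite /codim -(@card_in_imset _ _ fst L) => [|[i b] [i' b'] /[!inE] /eqP fi /eqP fi' /= ii'].
  apply: eq_card => i; rewrite inE; apply/imsetP/idP => [[j] | ].
    by rewrite inE => /eqP fj ->; rewrite fj.
  by case fi: (f i) => [b|] // _; exists (i, b); rewrite ?inE ?fi.
by move: fi; rewrite ii' fi' => -[->].
Qed.

Lemma family_face_inj : loop_free f -> {in powerset L &, injective (family_face f)}.
Proof.
move=> lf A B; rewrite !powersetE => AL BL /(congr1 (@face_pts n)).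
rewrite !family_face_pts // => EAB.
have LA := lword_enum AL; have LB := lword_enum BL.
have LAB : lword (enum A ++ enum B) by rewrite all_cat LA.
have odd_B2 : odd_letters (enum B ++ enum B) = set0.
  by apply/setP => l; rewrite !inE count_cat addnn odd_double.
have : I (enum (odd_letters (enum A ++ enum B))) = face_pts f.
  rewrite -transport_odd_letters // (transport_congr _ _ _ EAB) ?all_cat ?LB //.
  by rewrite transport_odd_letters ?all_cat ?LB // odd_B2 enum_set0.
move/(lf _ (odd_letters_sub LAB))/setP => odd_AB; apply/setP => l.
move: (odd_AB l); rewrite !inE count_cat !count_uniq_mem ?enum_uniq // !mem_enum.
by case: (l \in A); case: (l \in B).
Qed.

Lemma perfect_at : loop_free f -> has_card (face_family tau f) (2 ^ codim f).
Proof.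
move=> lf; exists [seq family_face f A | A <- enum (powerset L)]; split; [|split].
- by rewrite map_inj_in_uniq ?enum_uniq // => A B; rewrite !mem_enum; exact: family_face_inj.
- by rewrite size_map -cardE card_powerset card_labels.
- move=> g; rewrite face_familyP; split=> [[A AL ->] | /mapP [A]].
    by apply: map_f; rewrite mem_enum powersetE.
  by rewrite mem_enum powersetE => AL ->; exists A.
Qed.

(* The [2^n] subsets of labels reach all [2^n] vertices, so no two of them collide. *)
Lemma vertex_loop_free : vertex f -> (forall v, vertex v -> face_family tau f v) ->
  loop_free f.
Proof.
move=> fV all_v.
have G_inj : {in powerset L &, injective (family_face f)}.
  apply/imset_injP; have -> : family_face f @: powerset L = vertices n.
    apply/setP => v; apply/imsetP/verticesP => [[A AL ->] | /all_v].
      by apply: (face_family_vertex fV); apply/face_familyP; exists A; rewrite -?powersetE.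
    by case/face_familyP=> A AL ->; exists A; rewrite ?powersetE.
  by rewrite card_vertices card_powerset card_labels codim_vertex.
move=> C CL E; apply: G_inj; rewrite ?powersetE ?sub0set //.
by apply: face_pts_inj; rewrite !family_face_pts ?sub0set // E enum_set0.
Qed.

End OneFace.

(* By strongness a loop at [f] fixes [f] pointwise, hence also the vertex [u] of [f]. *)
Lemma loop_free_subface f u : proper_face f -> vertex u -> subface u f ->
  loop_free u -> loop_free f.
Proof.
move=> f_proper uV uf lfu C Cf E; apply: lfu.
  by apply/subsetP => l /(subsetP Cf); rewrite !inE => /eqP /uf ->.
have v := valid_realize (lword_enum Cf).
have loopE : seteq (img tau (realize (enum C)) (face_pts f)) (img tau [::] (face_pts f)).
  by move: E; rewrite /transport => ->.
have [fixf _] := strongS f_proper v (Logic.I : valid tau (face_pts f) [::]) loopE.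
rewrite /transport vertex_ptsE // img_point fixf //.
exact: (proj2 (face_ptsS u f) uf _ (face_center_in u)).
Qed.

End Pairing.

Theorem mainTheorem7 (n : nat) (hn : 1 <= n)
  (om : sidx n -> sidx n) (tau : sidx n -> pt n -> pt n) :
  regular om tau -> strong om tau ->
  (perfect tau <->
   exists f : code n, proper_face f /\
     forall v : code n, vertex v -> face_family tau f v).
Proof.
move=> [fpS _] strongS; have i0 : 'I_n := Ordinal hn.
have vertex_proper (v : code n) : vertex v -> proper_face v by exists i0.
split=> [perf | [f0 [_ f0_vertices]] f f_proper].
  pose v0 : code n := [ffun=> Some true].
  have v0V : vertex v0 by move=> i; rewrite ffunE.
  exists v0; split=> [|v]; first exact: vertex_proper.
  have := perf v0 (vertex_proper v0 v0V); rewrite codim_vertex //.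
  by move/has_card_vertices; apply=> g; apply: face_family_vertex.
have [u uV uf] := exists_vertex_subface f.
apply: (perfect_at fpS strongS f_proper (loop_free_subface fpS strongS f_proper uV uf _)).
apply: (vertex_loop_free fpS strongS (vertex_proper u uV) uV) => v vV.
exact: face_family_trans (face_family_sym fpS (f0_vertices u uV)) (f0_vertices v vV).
Qed.
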